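(* Let $t\ge 2$ and $m,n\ge1$ be integers. If there exists an MS$(m,t)$ and there exists an $m$-SCMS$(n,t-1)$, then there exists an MS$(mn,t)$.
   Context: $I_k=\{0,1,\dots,k-1\}$. An $n\times n$ integer matrix is a general magic square if all row sums, column sums, and the two diagonal sums $\sum_i a_{i,i}$, $\sum_i a_{i,n-1-i}$ are equal. $M$ is a general $t$-multimagic square if the entrywise powers $M^{*e}=(m_{i,j}^e)$, $e=1,\dots,t$, are all general magic squares. An MS$(n,t)$ is a general $t$-multimagic $n\times n$ square whose entries are exactly $0,1,\dots,n^2-1$; MS$(n,1)$ is written MS$(n)$. For $e\ge0$ let $S_e(n)=\frac1n\sum_{k=0}^{n^2-1}k^e$. An $m$-SCMS$(n,t)$ (set of $m$ complementary $t$-multimagic squares) is a list $B_0,\dots,B_{m-1}$ of (not necessarily distinct) MS$(n,t)$s, $B_s=(b^{(s)}_{i,j})$, such that: $\sum_{s\in I_m}\sum_{j\in I_n}(b^{(s)}_{i,j})^{t+1}=mS_{t+1}(n)$ for every $i\in I_n$; $\sum_{s\in I_m}\sum_{i\in I_n}(b^{(s)}_{i,j})^{t+1}=mS_{t+1}(n)$ for every $j\in I_n$; $\sum_{s\in I_m}\sum_{i\in I_n}(b^{(s)}_{i,i})^{t+1}=mS_{t+1}(n)$; and $\sum_{s\in I_m}\sum_{i\in I_n}(b^{(s)}_{i,n-1-i})^{t+1}=mS_{t+1}(n)$. An $m$-SCMS$(n,1)$ is written $m$-SCMS$(n)$. *)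

From HB Require Import structures.
From mathcomp Require Import all_boot all_order all_algebra.
Set Implicit Arguments. Unset Strict Implicit. Unset Printing Implicit Defensive.
Import GRing.Theory Num.Theory.

(* Squares are n x n matrices with natural entries (the entries of every
   square considered here are 0, ..., n^2-1, hence nonnegative). *)

Definition magic_pow (n : nat) (A : 'M[nat]_n) (e : nat) : Prop :=
  exists c : nat,
    [/\ forall i : 'I_n, (\sum_(j < n) A i j ^ e)%N = c,
        forall j : 'I_n, (\sum_(i < n) A i j ^ e)%N = c,
        (\sum_(i < n) A i i ^ e)%N = c
      & (\sum_(i < n) A i (rev_ord i) ^ e)%N = c].

Definition multimagic (n t : nat) (A : 'M[nat]_n) : Prop :=
  forall e : nat, (1 <= e <= t)%N -> magic_pow A e.

Definition entries_exact (n : nat) (A : 'M[nat]_n) : Prop :=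
  perm_eq [seq A ij.1 ij.2 | ij <- enum {: 'I_n * 'I_n}]
          (iota 0 (n ^ 2)).

Definition MS (n t : nat) (A : 'M[nat]_n) : Prop :=
  entries_exact A /\ multimagic t A.

Definition S_ (e n : nat) : rat :=
  (((\sum_(k < n ^ 2) k ^ e)%N)%:R / n%:R)%R.

Definition SCMS (m n t : nat) (B : 'I_m -> 'M[nat]_n) : Prop :=
  [/\ forall s : 'I_m, MS t (B s),
      forall i : 'I_n,
        (((\sum_(s < m) \sum_(j < n) (B s i j) ^ t.+1)%N)%:R = m%:R * S_ t.+1 n :> rat)%R,
      forall j : 'I_n,
        (((\sum_(s < m) \sum_(i < n) (B s i j) ^ t.+1)%N)%:R = m%:R * S_ t.+1 n :> rat)%R,
      (((\sum_(s < m) \sum_(i < n) (B s i i) ^ t.+1)%N)%:R = m%:R * S_ t.+1 n :> rat)%R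
    & (((\sum_(s < m) \sum_(i < n) (B s i (rev_ord i)) ^ t.+1)%N)%:R
        = m%:R * S_ t.+1 n :> rat)%R].

From HB Require Import structures.
From mathcomp Require Import all_boot all_order all_algebra zify.
Set Implicit Arguments. Unset Strict Implicit. Unset Printing Implicit Defensive.
Import GRing.Theory Num.Theory.

(* Index the rows and columns of a square of order mn by pairs (block, position)
   and put into block (i, j) the square B_(L i j) shifted by n^2 A(i, j), where
   L is a diagonal Latin square of order m.  Expanding (n^2 a + b)^e binomially,
   each line sum of e-th powers (e <= t) becomes a combination of line power
   sums of A (constant for exponents <= t), of the B_s (constant for exponents
   < t) and, when e = t, of the sum over all s of the t-th power sums of the B_s
   along a line, which is constant by complementarity because every line of L
   meets each index s exactly once.  Diagonal Latin squares exist for every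
   order except 2 and 3, and neither an MS(2,1) nor an MS(3,2) exists. *)

Definition diag_latin (T : finType) (r : T -> T) (f : T -> T -> T) : Prop :=
  [/\ forall i, injective (f i), forall j, injective (f^~ j),
      injective (fun i => f i i) & injective (fun i => f i (r i))].

Lemma diag_latin_transfer (T : finType) (r : T -> T) f m (e : 'I_m -> T) :
  diag_latin r f -> injective e -> (forall i, e (rev_ord i) = r (e i)) -> #|T| = m ->
  exists L, diag_latin (@rev_ord m) L.
Proof.
move=> [fr fc fd fa] e_inj e_rev cardT.
pose c (x : T) : 'I_m := cast_ord cardT (enum_rank x).
have c_inj : injective c by move=> x y /cast_ord_inj /enum_rank_inj.
exists (fun i j => c (f (e i) (e j))); split.
- by move=> i j1 j2 /c_inj /fr /e_inj.
- by move=> j i1 i2 /c_inj /(fc (e j)) /e_inj.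
- by move=> i1 i2 /c_inj /fd /e_inj.
- by move=> i1 i2 /c_inj; rewrite !e_rev => /fa /e_inj.
Qed.

(* Prolongation along the transversal [x |-> (x, s x)]: each of its cells
   hands its symbol to the new row and column and receives the new symbol. *)
Definition prolong (T : finType) (f : T -> T -> T) (s s' : T -> T)
    (x y : option T) : option T :=
  match x, y with
  | None, None => None
  | None, Some y => Some (f (s' y) y)
  | Some x, None => Some (f x (s x))
  | Some x, Some y => if y == s x then None else Some (f x y)
  end.

Lemma diag_latin_prolong (T : finType) r f s s' :
  diag_latin r f -> cancel s s' -> cancel s' s -> injective (fun x => f x (s x)) ->
  (forall x, s x != x) -> (forall x, s x != r x) ->
  diag_latin (omap r) (@prolong T f s s').
Proof.
move=> [fr fc fd fa] ss' s's tr_inj s_neq s_neqr.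
have s_inj : injective s := can_inj ss'.
split.
- case=> [x|] [y1|] [y2|] //=.
  + case: eqP => e1; case: eqP => e2 //; first by rewrite e1 e2.
    by move=> [] /fr ->.
  + by case: eqP => e1 // [] /fr e; rewrite e in e1.
  + by case: eqP => e1 // [] /fr e; rewrite e in e1.
  + move=> [] e; have := tr_inj (s' y1) (s' y2); rewrite !s's => /(_ e) e'.
    by rewrite -[y1]s's e' s's.
- case=> [y|] [x1|] [x2|] //=.
  + case: eqP => e1; case: eqP => e2 //.
      by move=> _; apply/congr1/s_inj; rewrite -e1 -e2.
    by move=> [] /fc ->.
  + case: eqP => e1 // [] /fc e; by [rewrite e s's in e1 | rewrite -e s's in e1].
  + case: eqP => e1 // [] /fc e; by [rewrite e s's in e1 | rewrite -e s's in e1].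
  + by move=> [] /tr_inj ->.
- have s_neq' x : (x == s x) = false by rewrite eq_sym; apply/negbTE.
  by case=> [x1|] [x2|] //=; rewrite s_neq' ?s_neq' // => -[] /fd ->.
- have s_neqr' x : (r x == s x) = false by rewrite eq_sym; apply/negbTE.
  by case=> [x1|] [x2|] //=; rewrite s_neqr' ?s_neqr' // => -[] /fa ->.
Qed.

Section CyclicConstruction.
Variable k : nat.
Local Notation K := k.+1.

Lemma eqmod_lt4K x y : x %% K = y %% K -> x < 4 * K -> y < 4 * K ->
  x = y \/ x = y + K \/ x = y + 2 * K \/ x = y + 3 * K \/
  y = x + K \/ y = x + 2 * K \/ y = x + 3 * K.
Proof.
move=> e hx hy.
have qx : x %/ K < 4 by rewrite ltn_divLR.
have qy : y %/ K < 4 by rewrite ltn_divLR.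
move: (divn_eq x K) (divn_eq y K) qx qy; rewrite e.
by case: (x %/ K) => [|[|[|[|?]]]]; case: (y %/ K) => [|[|[|[|?]]]] //; lia.
Qed.

Definition zmodK (x : nat) : 'I_K := inord (x %% K).

Lemma zmodKE x : zmodK x = x %% K :> nat.
Proof. by rewrite inordK // ltn_pmod. Qed.

Lemma zmodK_eqmod x y : zmodK x = zmodK y -> x %% K = y %% K.
Proof. by move=> h; rewrite -!zmodKE h. Qed.

Lemma modK_succ u : u < K -> (u + 1) %% K = (if u + 1 < K then u + 1 else 0).
Proof.
move=> hu; case: ifP => h; first by rewrite modn_small.
have -> : u + 1 = K by lia.
by rewrite modnn.
Qed.

Lemma eq_leq_cases l x y : (l <= x) = (l <= y) -> (l <= x /\ l <= y) \/ (x < l /\ y < l).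
Proof. by case: (leqP l x); case: (leqP l y) => // *; [left|right]. Qed.

(* [cdist u v] is [v - u] modulo [K], kept in a form [lia] understands. *)
Definition cdist (u v : nat) := if u <= v then v - u else v + K - u.

Lemma cdist_id u : cdist u u = 0.
Proof. by rewrite /cdist leqnn subnn. Qed.

Lemma cdist_succ (u : 'I_K) : 0 < k -> cdist u (zmodK (u + 1)) = 1.
Proof.
move=> k0; rewrite /cdist zmodKE modK_succ //; have := ltn_ord u.
by case: (ltnP (u + 1) K) => h /=; case: ifPn => ?; lia.
Qed.

(* The symbols of a square of order [2K]; [flip] is the reversal of the
   diagonal order [(false, 0), ..., (false, k), (true, k), ..., (true, 0)]. *)
Local Notation Sym := (bool * 'I_K)%type.

Definition flip (p : Sym) : Sym := (~~ p.1, p.2).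
Definition shift (p : Sym) : Sym := (p.1, zmodK (p.2 + 1)).
Definition unshift (p : Sym) : Sym := (p.1, zmodK (p.2 + k)).

Lemma shiftK : cancel shift unshift.
Proof.
case=> a u; congr (_, _); apply/val_inj; rewrite /= !zmodKE modnDml.
by rewrite -addnA add1n modnDr modn_small.
Qed.

Lemma unshiftK : cancel unshift shift.
Proof.
case=> a u; congr (_, _); apply/val_inj; rewrite /= !zmodKE modnDml.
by rewrite -addnA addn1 modnDr modn_small.
Qed.

Lemma shift_neq x : 0 < k -> shift x != x.
Proof.
move=> k0; case: x => a u; apply/negP => /eqP [] /(congr1 (@nat_of_ord _)).
by rewrite zmodKE modK_succ //; have := ltn_ord u; case: (ltnP (u + 1) K) => /=; lia.
Qed.

Lemma shift_neq_flip x : shift x != flip x.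
Proof. by case: x => [[] u]. Qed.

Definition prolongable (f : Sym -> Sym -> Sym) :=
  diag_latin flip f /\ injective (fun x => f x (shift x)).

(* In a row, [2 v + b - u] determines [(b, v)] up to [v |-> v + K/2], which
   the first coordinate separates. *)
Definition latin_even (p q : Sym) : Sym :=
  (p.1 (+) (K./2 <= cdist p.2 q.2), zmodK (2 * q.2 + (K - p.2) + q.1)).

Lemma latin_even_prolongable : 0 < k -> ~~ odd K -> prolongable latin_even.
Proof.
move=> k0 ev.
have hl : K = 2 * uphalf k.
  by have := odd_double_half K; rewrite (negbTE ev) add0n -muln2 mulnC.
set l := uphalf k in hl *.
have l0 : (l <= 0) = false by lia.
split; first split.
- case=> a u [b1 v1] [b2 v2] [] /(congr1 (addb a)); rewrite !addKb => h /zmodK_eqmod.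
  have h1 := ltn_ord u; have h2 := ltn_ord v1; have h3 := ltn_ord v2.
  move: h; rewrite /cdist => h E; have H := eqmod_lt4K E; clear E.
  case: b1 b2 H => [] [] /= H; (case: (leqP u v1) h => c1; case: (leqP u v2) => c2 /eq_leq_cases h);
  (have {}H := H ltac:(lia) ltac:(lia)); try (exfalso; lia);
  congr (_, _); apply/ord_inj; lia.
- move=> [b v] [a1 u1] [a2 u2] [] h /zmodK_eqmod E.
  have h1 := ltn_ord u1; have h2 := ltn_ord u2; have h3 := ltn_ord v.
  have eu : u1 = u2.
    by apply/ord_inj; case: b E => /= E; have := eqmod_lt4K E ltac:(lia) ltac:(lia); lia.
  by subst u2; congr (_, _); move: h; case: (_ <= _); case: a1; case: a2.
- move=> [a1 u1] [a2 u2] [] /=; rewrite !cdist_id l0 !addbF => -> /zmodK_eqmod E.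
  have h1 := ltn_ord u1; have h2 := ltn_ord u2.
  congr (_, _); apply/ord_inj.
  by case: a2 E => /= E; have := eqmod_lt4K E ltac:(lia) ltac:(lia); lia.
- move=> [a1 u1] [a2 u2] [] /=; rewrite !cdist_id l0 !addbF => -> /zmodK_eqmod E.
  have h1 := ltn_ord u1; have h2 := ltn_ord u2.
  congr (_, _); apply/ord_inj.
  by case: a2 E => /= E; have := eqmod_lt4K E ltac:(lia) ltac:(lia); lia.
- move=> [a1 u1] [a2 u2] [] /=; rewrite !cdist_succ // => h /zmodK_eqmod.
  have h1 := ltn_ord u1; have h2 := ltn_ord u2.
  rewrite !zmodKE !modK_succ //.
  have -> : a1 = a2 by move: h; case: (_ <= _); case: a1; case: a2.
  move=> E {h}; congr (_, _); apply/ord_inj; move: E.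
  case: (ltnP (u1 + 1) K) => c1; case: (ltnP (u2 + 1) K) => c2 /=;
  by case: a2 => /= E; have := eqmod_lt4K E ltac:(lia) ltac:(lia); lia.
Qed.

(* As [K] is odd, [2 v] determines [v] in a row; in a column [u + a] determines
   [(a, u)] up to [(false, u) ~ (true, u - 1)], which the first coordinate
   separates. *)
Definition latin_odd (p q : Sym) : Sym :=
  (p.1 (+) q.1 (+) (cdist p.2 q.2 == p.1), zmodK (2 * q.2 + (K - p.2) + (K - p.1))).

Lemma latin_odd_prolongable : 0 < k -> odd K -> prolongable latin_odd.
Proof.
move=> k0 od.
have hl : K = 2 * uphalf k + 1.
  by have := odd_double_half K; rewrite od add1n -muln2 mulnC addn1 => ->.
set l := uphalf k in hl *.
split; first split.
- move=> [a u] [b1 v1] [b2 v2] [] + /zmodK_eqmod E.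
  have h1 := ltn_ord u; have h2 := ltn_ord v1; have h3 := ltn_ord v2.
  have ev : v1 = v2.
    by apply/ord_inj; case: a E => /= E; have := eqmod_lt4K E ltac:(lia) ltac:(lia); lia.
  by subst v2; clear E; case: (_ == _); case: a; case: b1; case: b2.
- move=> [b v] [a1 u1] [a2 u2] [] + /zmodK_eqmod; rewrite /cdist /=.
  have h1 := ltn_ord u1; have h2 := ltn_ord u2; have h3 := ltn_ord v.
  case: a1; case: a2; case: b => /=; case: (leqP u1 v) => c1; case: (leqP u2 v) => c2;
  case: eqP => e1; case: eqP => e2 => //= _ E; have H := eqmod_lt4K E ltac:(lia) ltac:(lia);
  (try (exfalso; lia)); congr (_, _); apply/ord_inj; lia.
- move=> [a1 u1] [a2 u2] [] /=; rewrite !cdist_id !addbb => + /zmodK_eqmod.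
  have h1 := ltn_ord u1; have h2 := ltn_ord u2.
  case: a1; case: a2 => //= _ E; have H := eqmod_lt4K E ltac:(lia) ltac:(lia);
  congr (_, _); apply/ord_inj; lia.
- move=> [a1 u1] [a2 u2] [] /=; rewrite !cdist_id => + /zmodK_eqmod.
  have h1 := ltn_ord u1; have h2 := ltn_ord u2.
  case: a1; case: a2 => //= _ E; have H := eqmod_lt4K E ltac:(lia) ltac:(lia);
  congr (_, _); apply/ord_inj; lia.
- move=> [a1 u1] [a2 u2] [] /=; rewrite !cdist_succ // !addbb => + /zmodK_eqmod.
  have h1 := ltn_ord u1; have h2 := ltn_ord u2.
  rewrite !zmodKE !modK_succ //.
  case: a1; case: a2 => //= _;
  case: (ltnP (u1 + 1) K) => c1; case: (ltnP (u2 + 1) K) => c2 /= E;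
  have H := eqmod_lt4K E ltac:(lia) ltac:(lia); congr (_, _); apply/ord_inj; lia.
Qed.

Definition latin_pair : Sym -> Sym -> Sym := if odd K then latin_odd else latin_even.

Lemma latin_pair_prolongable : 0 < k -> prolongable latin_pair.
Proof.
rewrite /latin_pair => k0; case: ifP => h; first exact: latin_odd_prolongable.
by apply: latin_even_prolongable; rewrite ?h.
Qed.

Definition sym_of_ord (m i : nat) : Sym :=
  if i < K then (false, zmodK i) else (true, zmodK (m.-1 - i)).

Lemma diag_latin_double m : 0 < k -> m = 2 * K -> exists L, diag_latin (@rev_ord m) L.
Proof.
move=> k0 hm; have [fL _] := latin_pair_prolongable k0.
apply: (diag_latin_transfer (e := fun i : 'I_m => sym_of_ord m i) fL).
- move=> i j; rewrite /sym_of_ord; have := ltn_ord i; have := ltn_ord j.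
  case: (ltnP i K) => c1; case: (ltnP j K) => c2 hj hi //= [] /zmodK_eqmod;
  rewrite !modn_small; try lia; move=> e; apply/ord_inj; lia.
- move=> i; rewrite /sym_of_ord /flip /=; have := ltn_ord i.
  case: (ltnP i K) => c1; case: (ltnP (m - i.+1) K) => c2 hi; try (exfalso; lia);
  by congr (_, _); congr zmodK; lia.
- by rewrite card_prod card_bool card_ord hm.
Qed.

Definition osym_of_ord (m i : nat) : option Sym :=
  if i == K then None else Some (sym_of_ord m i).

Lemma diag_latin_double_succ m : 0 < k -> m = 2 * K + 1 ->
  exists L, diag_latin (@rev_ord m) L.
Proof.
move=> k0 hm; have [fL tr_inj] := latin_pair_prolongable k0.
have := diag_latin_prolong fL shiftK unshiftK tr_inj (shift_neq^~ k0) shift_neq_flip.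
move=> /(diag_latin_transfer (e := fun i : 'I_m => osym_of_ord m i)); apply.
- move=> i j; rewrite /osym_of_ord /sym_of_ord; have := ltn_ord i; have := ltn_ord j.
  case: (ltnP i K) => c1; case: (ltnP j K) => c2 hj hi;
  case: eqP => e1; case: eqP => e2 //= ; try (move=> _; apply/ord_inj; lia);
  move=> [] /zmodK_eqmod; rewrite !modn_small; try lia; move=> e; apply/ord_inj; lia.
- move=> i; rewrite /osym_of_ord /sym_of_ord /flip /=; have := ltn_ord i.
  case: (ltnP i K) => c1; case: (ltnP (m - i.+1) K) => c2 hi;
  case: eqP => e1; case: eqP => e2 //=; try (exfalso; lia);
  by congr (Some (_, _)); congr zmodK; lia.
- by rewrite card_option card_prod card_bool card_ord hm addn1.
Qed.

End CyclicConstruction.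

Lemma diag_latin_exists m : m != 2 -> m != 3 -> exists L, diag_latin (@rev_ord m) L.
Proof.
move=> m2 m3; case: (leqP m 1) => hm.
  exists (fun i _ => i); split=> [i|j||] x y _; apply/ord_inj;
  by have := ltn_ord x; have := ltn_ord y; lia.
have hd := odd_double_half m; rewrite -muln2 in hd.
case: (boolP (odd m)) => od; rewrite ?od in hd.
  by apply: (@diag_latin_double_succ (m./2).-1); lia.
by apply: (@diag_latin_double (m./2).-1); rewrite ?(negbTE od) in hd; lia.
Qed.

Inductive line (k : nat) := Row of 'I_k | Col of 'I_k | Diag | Anti.
Arguments Diag {k}.
Arguments Anti {k}.

Definition cell k (l : line k) (j : 'I_k) : 'I_k * 'I_k :=
  match l with
  | Row i => (i, j) | Col i => (j, i) | Diag => (j, j) | Anti => (j, rev_ord j)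
  end.

Definition line_pow_sum k (A : 'M[nat]_k) e (l : line k) : nat :=
  \sum_j A (cell l j).1 (cell l j).2 ^ e.

Lemma magic_powE k (A : 'M[nat]_k) e :
  magic_pow A e <-> exists c, forall l, line_pow_sum A e l = c.
Proof.
split=> [[c [hr hc hd ha]]|[c hl]]; first by exists c; case.
by exists c; split=> [i|j||]; [apply: (hl (Row i)) | apply: (hl (Col j)) | apply: (hl Diag) | apply: (hl Anti)].
Qed.

Lemma magic_pow0 k (A : 'M[nat]_k) : magic_pow A 0.
Proof.
apply/magic_powE; exists k => l.
by rewrite /line_pow_sum (eq_bigr (fun=> 1)) // sum_nat_const card_ord muln1.
Qed.

Lemma diag_latin_line m (L : 'I_m -> 'I_m -> 'I_m) (l : line m) :
  diag_latin (@rev_ord m) L -> injective (fun j => L (cell l j).1 (cell l j).2).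
Proof. by case: l => [i|j||] [fr fc fd fa]; [apply: fr | apply: fc | | ]. Qed.

Section ExactEntries.
Variables (n : nat) (A : 'M[nat]_n).
Hypothesis exactA : entries_exact A.

Lemma entries_exact_inj : injective (fun ij : 'I_n * 'I_n => A ij.1 ij.2).
Proof.
apply/injectiveP; rewrite /injectiveb /dinjectiveb.
by rewrite (perm_uniq exactA) iota_uniq.
Qed.

Lemma entries_exact_ltn i j : A i j < n ^ 2.
Proof.
have : A i j \in iota 0 (n ^ 2).
  by rewrite -(perm_mem exactA); apply/mapP; exists (i, j); rewrite ?mem_enum.
by rewrite mem_iota.
Qed.

Lemma sum_entries_pow e : \sum_i \sum_j A i j ^ e = \sum_(x < n ^ 2) x ^ e.
Proof.
rewrite pair_big /= -big_enum.
rewrite -(big_map (fun ij : 'I_n * 'I_n => A ij.1 ij.2) xpredT (fun v => v ^ e)).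
by rewrite (perm_big _ exactA) -(big_mkord xpredT (fun x => x ^ e)) /index_iota subn0.
Qed.

End ExactEntries.

(* The n rows of a magic [A ^ e] share the sum of all e-th powers equally. *)
Definition power_mean (n e : nat) : nat := (\sum_(x < n ^ 2) x ^ e) %/ n.

Lemma MS_line_pow_sum n t (A : 'M[nat]_n) e l :
  0 < n -> MS t A -> e <= t -> line_pow_sum A e l = power_mean n e.
Proof.
move=> n0 [exactA magicA] le_et.
have [c hc] : exists c, forall l, line_pow_sum A e l = c.
  by apply/magic_powE; case: e le_et => [|e] he; [apply: magic_pow0 | apply: magicA].
rewrite hc /power_mean -(sum_entries_pow exactA e) (eq_bigr (fun=> c)) => [|i _].
  by rewrite sum_nat_const card_ord mulKn.
exact: (hc (Row i)).
Qed.

Lemma SCMS_line_pow_sum m n t (B : 'I_m -> 'M[nat]_n) : SCMS t B ->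
  exists K, forall l, \sum_s line_pow_sum (B s) t.+1 l = K.
Proof.
case=> _ hr hc hd ha; exists (\sum_s \sum_i B s i i ^ t.+1).
by case=> [i|j||] //; apply/eqP; rewrite -(eqr_nat rat) /line_pow_sum /= ?hr ?hc ?ha hd.
Qed.

(* Binomial expansion of [(N a + b) ^ e]: every term but [b ^ t] only involves
   power sums that are constant along lines. *)
Lemma sum_blocked_pow m n t N (a : 'I_m -> nat) (b : 'I_m -> 'I_n -> nat) cA cB K e :
  (forall i, i <= t -> \sum_j a j ^ i = cA i) ->
  (forall j i, i < t -> \sum_l b j l ^ i = cB i) ->
  \sum_j \sum_l b j l ^ t = K -> e <= t ->
  \sum_j \sum_l (N * a j + b j l) ^ e =
    \sum_(i < e.+1) 'C(e, i) * N ^ i * (if e - i < t then cA i * cB (e - i) else K).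
Proof.
move=> ha hb hK le_et.
under eq_bigr do under eq_bigr do rewrite addnC expnDn.
under eq_bigr do rewrite exchange_big.
rewrite exchange_big; apply: eq_bigr => -[i lt_ie] _ /=.
under eq_bigr do rewrite -big_distrr.
rewrite -big_distrr -mulnA; congr (_ * _).
under eq_bigr do rewrite -big_distrl /=.
case: ifP => [lt_t|/negbT]; last first.
  rewrite -leqNgt => le_t; have i0 : i = 0 by lia.
  have et : e = t by lia.
  by rewrite i0 et mul1n -hK; apply: eq_bigr => j _; rewrite subn0 muln1.
under eq_bigr do rewrite hb // expnMn.
rewrite -ha; last by lia.
rewrite big_distrl big_distrr; apply: eq_bigr => j _ /=; nia.
Qed.

Section BlockIndex.
Variables m n : nat.
Local Notation N := n.+1.

Lemma pack_subproof (i : 'I_m) (j : 'I_N) : i * N + j < m * N.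
Proof. by have := ltn_ord i; have := ltn_ord j; nia. Qed.

Definition pack (i : 'I_m) (j : 'I_N) : 'I_(m * N) := Ordinal (pack_subproof i j).

Lemma hi_subproof (x : 'I_(m * N)) : x %/ N < m.
Proof. by rewrite ltn_divLR. Qed.

Definition hi (x : 'I_(m * N)) : 'I_m := Ordinal (hi_subproof x).
Definition lo (x : 'I_(m * N)) : 'I_N := Ordinal (ltn_pmod x (ltn0Sn n)).

Lemma hi_pack i j : hi (pack i j) = i.
Proof. by apply/ord_inj; rewrite /= divnMDl // divn_small // addn0. Qed.

Lemma lo_pack i j : lo (pack i j) = j.
Proof. by apply/ord_inj; rewrite /= modnMDl modn_small. Qed.

Lemma pack_hilo x : pack (hi x) (lo x) = x.
Proof. by apply/ord_inj; rewrite /= -divn_eq. Qed.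

Lemma rev_pack i j : rev_ord (pack i j) = pack (rev_ord i) (rev_ord j).
Proof. by apply/ord_inj => /=; have := ltn_ord i; have := ltn_ord j; nia. Qed.

Lemma big_pack (F : 'I_(m * N) -> nat) :
  \sum_x F x = \sum_(i < m) \sum_(j < N) F (pack i j).
Proof.
rewrite pair_big /= (reindex (fun p : 'I_m * 'I_N => pack p.1 p.2)) //.
apply: onW_bij; exists (fun x => (hi x, lo x)) => [[i j]|x] /=.
  by rewrite hi_pack lo_pack.
by rewrite pack_hilo.
Qed.

Definition line_hi (l : line (m * N)) : line m :=
  match l with Row x => Row (hi x) | Col x => Col (hi x) | Diag => Diag | Anti => Anti end.

Definition line_lo (l : line (m * N)) : line N :=
  match l with Row x => Row (lo x) | Col x => Col (lo x) | Diag => Diag | Anti => Anti end.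

Lemma cell_pack l i j : cell l (pack i j) =
  (pack (cell (line_hi l) i).1 (cell (line_lo l) j).1,
   pack (cell (line_hi l) i).2 (cell (line_lo l) j).2).
Proof. by case: l => [x|x||] /=; rewrite ?pack_hilo ?rev_pack. Qed.

End BlockIndex.

Lemma divmod_inj d a1 a2 b1 b2 : b1 < d -> b2 < d -> d * a1 + b1 = d * a2 + b2 ->
  a1 = a2 /\ b1 = b2.
Proof.
move=> lt_b1 lt_b2 E; have d0 : 0 < d by case: d lt_b1 {lt_b2 E}.
have := congr1 (modn^~ d) E; have := congr1 (divn^~ d) E.
by rewrite /= !(mulnC d) !modnMDl !modn_small // !divnMDl // !divn_small // !addn0.
Qed.

Lemma entries_exactP n (A : 'M[nat]_n) :
  injective (fun ij : 'I_n * 'I_n => A ij.1 ij.2) -> (forall i j, A i j < n ^ 2) ->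
  entries_exact A.
Proof.
move=> A_inj A_ltn; rewrite /entries_exact; set s := [seq _ | ij <- _].
have uniq_s : uniq s by rewrite map_inj_uniq ?enum_uniq.
have sub_s : {subset s <= iota 0 (n ^ 2)}.
  by move=> _ /mapP [[i j] _ ->]; rewrite mem_iota add0n A_ltn.
have size_s : size (iota 0 (n ^ 2)) <= size s.
  by rewrite size_iota size_map -cardE card_prod card_ord.
have [_ eq_s] := uniq_min_size uniq_s sub_s size_s.
exact: uniq_perm uniq_s (iota_uniq _ _) eq_s.
Qed.

Section BlockSquare.
Variables (m n : nat) (A : 'M[nat]_m) (B : 'I_m -> 'M[nat]_n.+1)
  (L : 'I_m -> 'I_m -> 'I_m).
Local Notation N := n.+1.

Definition block_square : 'M[nat]_(m * N) :=
  \matrix_(x, y) (N ^ 2 * A (hi x) (hi y) + B (L (hi x) (hi y)) (lo x) (lo y)).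

Lemma block_square_pack i1 i2 j1 j2 :
  block_square (pack i1 i2) (pack j1 j2) = N ^ 2 * A i1 j1 + B (L i1 j1) i2 j2.
Proof. by rewrite mxE !hi_pack !lo_pack. Qed.

Lemma entries_exact_block_square :
  entries_exact A -> (forall s, entries_exact (B s)) -> entries_exact block_square.
Proof.
move=> exactA exactB; apply: entries_exactP => [[x1 y1] [x2 y2]|x y]; cbn [fst snd].
  rewrite -[x1]pack_hilo -[y1]pack_hilo -[x2]pack_hilo -[y2]pack_hilo !block_square_pack.
  move=> /divmod_inj[]; rewrite ?entries_exact_ltn //.
  move=> /(@entries_exact_inj _ _ exactA (_, _) (_, _)) /pair_equal_spec[-> ->].
  by move=> /(@entries_exact_inj _ _ (exactB _) (_, _) (_, _)) /pair_equal_spec[-> ->].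
rewrite mxE expnMn; set a := A _ _; set b := B _ _ _.
have lt_a : a < m ^ 2 by apply: entries_exact_ltn.
have lt_b : b < N ^ 2 by apply: entries_exact_ltn.
apply: (@leq_trans (N ^ 2 * a.+1)); first by rewrite mulnS addnC ltn_add2r.
by rewrite mulnC leq_mul2r lt_a orbT.
Qed.

Lemma multimagic_block_square t : 0 < m -> MS t.+1 A -> SCMS t B ->
  diag_latin (@rev_ord m) L -> multimagic t.+1 block_square.
Proof.
move=> m0 msA scB latL e /andP[_ le_et]; have [K hK] := SCMS_line_pow_sum scB.
apply/magic_powE; exists (\sum_(i < e.+1) 'C(e, i) * (N ^ 2) ^ i *
  (if e - i < t.+1 then power_mean m i * power_mean N (e - i) else K)) => l.
rewrite /line_pow_sum big_pack.
under eq_bigr do under eq_bigr do rewrite cell_pack block_square_pack.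
apply: sum_blocked_pow => // [i le_it|j i lt_it|].
- exact: (MS_line_pow_sum _ m0 msA le_it).
- by have [msB _ _ _ _] := scB; apply: (MS_line_pow_sum _ (ltn0Sn n) (msB _) lt_it).
- by rewrite -(hK (line_lo l)) [RHS](reindex_inj (diag_latin_line (l := line_hi l) latL)).
Qed.

End BlockSquare.

Lemma power_mean_3 : power_mean 3 1 = 12 /\ power_mean 3 2 = 68.
Proof.
rewrite /power_mean -!(big_mkord xpredT (fun x => x ^ _)) /index_iota /=.
by split; rewrite !big_cons big_nil.
Qed.

Lemma big_ord2 (F : 'I_2 -> nat) : \sum_i F i = F ord0 + F ord_max.
Proof. by rewrite !big_ord_recl big_ord0 addn0; congr (_ + F _); apply/ord_inj. Qed.

Lemma big_ord3 (F : 'I_3 -> nat) : \sum_i F i = F ord0 + F (inord 1) + F ord_max.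
Proof.
rewrite !big_ord_recl big_ord0 addn0 addnA.
by congr (_ + F _ + F _); apply/ord_inj; rewrite ?inordK.
Qed.

Lemma MS2_nonexistent t (A : 'M[nat]_2) : 0 < t -> ~ MS t A.
Proof.
move=> t0 msA; have [exactA _] := msA.
have := MS_line_pow_sum (Row ord0) (ltn0Sn 1) msA t0.
rewrite -(MS_line_pow_sum (Col ord0) (ltn0Sn 1) msA t0) /line_pow_sum !big_ord2 /=.
move=> /addnI; rewrite !expn1 => A_eq.
by have [] := @entries_exact_inj _ _ exactA (ord0, ord_max) (ord_max, ord0) A_eq.
Qed.

(* A row of an MS(3,2) would be three naturals with sum 12 and sum of squares 68. *)
Lemma MS3_nonexistent t (A : 'M[nat]_3) : 1 < t -> ~ MS t A.
Proof.
move=> t1 msA; have [pm1 pm2] := power_mean_3.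
have := MS_line_pow_sum (Row ord0) (ltn0Sn 2) msA (ltnW t1).
have := MS_line_pow_sum (Row ord0) (ltn0Sn 2) msA t1.
rewrite pm1 pm2 /line_pow_sum !big_ord3 /= !expn1.
move: (A _ ord0) (A _ (inord 1)) (A _ ord_max) => a b c sq sum.
have a_le : a <= 12 by lia.
have b_le : b <= 12 by lia.
have c_eq : c = 12 - a - b by lia.
rewrite c_eq in sq; clear sum c_eq.
move: a a_le b b_le sq => [|[|[|[|[|[|[|[|[|[|[|[|[|a]]]]]]]]]]]]] a_le //;
by move=> [|[|[|[|[|[|[|[|[|[|[|[|[|b]]]]]]]]]]]]] b_le //; move/eqP.
Qed.

Theorem mainTheorem2 (t m n : nat) :
  (2 <= t)%N -> (1 <= m)%N -> (1 <= n)%N ->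
  (exists A : 'M[nat]_m, MS t A) ->
  (exists B : 'I_m -> 'M[nat]_n, SCMS (t - 1) B) ->
  exists C : 'M[nat]_(m * n), MS t C.
Proof.
case: t => // t t2 m0 n0 [A msA] [B scB]; rewrite subn1 /= in scB.
have [L latL] : exists L, diag_latin (@rev_ord m) L.
  by apply: diag_latin_exists; apply/eqP => m_eq; subst m;
    [apply: (MS2_nonexistent _ msA) | apply: (MS3_nonexistent _ msA)].
case: n B scB n0 => // n B scB _.
exists (block_square A B L); split.
  have [msB _ _ _ _] := scB.
  by apply: entries_exact_block_square => [|s]; [case: msA | case: (msB s)].
exact: multimagic_block_square.
Qed.
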